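(* Let $0<\alpha<1$ and for integers $t\ge 1$ define $$S(t)\triangleq\sum_{i=1}^{t-1}\frac{\alpha^{t-i}}{i+1}$$ (so $S(1)=0$). Let $t_0=\left\lceil \frac{2\alpha}{1-\alpha}\right\rceil$ and $A=\max\left\{t_0\, S(t_0),\ \frac{2\alpha}{1-\alpha}\right\}$. Then for all integers $t\ge t_0$, $$S(t)\le \frac{A}{t}.$$
   Context: In the paper, $\alpha=(1-\eta\mu)^E$ is the contraction factor of $E$ gradient-descent steps with step size $\eta\in(0,\frac{2}{\mu+L}]$ on a $\mu$-strongly convex, $L$-smooth function. *)

From mathcomp Require Import all_boot all_order all_algebra.
Set Implicit Arguments. Unset Strict Implicit. Unset Printing Implicit Defensive.
Import Order.TTheory GRing.Theory Num.Theory.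
Local Open Scope ring_scope.

Definition S_sum (R : archiRealFieldType) (alpha : R) (t : nat) : R :=
  \sum_(1 <= i < t) alpha ^+ (t - i) / (i.+1)%:R.

Definition t0 (R : archiRealFieldType) (alpha : R) : int :=
  Num.ceil (2 * alpha / (1 - alpha)).

(* A = max { t0 * S(t0), 2 alpha / (1 - alpha) }; S is evaluated at the
   natural number |t0| (t0 >= 1 when 0 < alpha < 1). *)
Definition A_const (R : archiRealFieldType) (alpha : R) : R :=
  Num.max ((t0 alpha)%:~R * S_sum alpha `|t0 alpha|%N) (2 * alpha / (1 - alpha)).

(** The partial sums satisfy [S(t+1) = alpha S(t) + alpha/(t+1)].  Writing
    [c = 2 alpha / (1 - alpha)], for [m >= c] one has [(1 - alpha) m - alpha >=
    (1 - alpha) m / 2], and together with [A >= c] this makes the bound [A/m]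
    propagate through the recurrence: [alpha A/m + alpha/(m+1) <= A/(m+1)].
    The choice [A >= t0 S(t0)] starts the induction at [t0 = ceil c]. *)

From mathcomp Require Import all_boot all_order all_algebra.
From mathcomp Require Import ring lra.
Import Order.TTheory GRing.Theory Num.Theory.
Local Open Scope ring_scope.

Lemma S_sumS (R : archiRealFieldType) (alpha : R) (t : nat) : (1 <= t)%N ->
  S_sum alpha t.+1 = alpha * S_sum alpha t + alpha / t.+1%:R.
Proof.
move=> t_gt0; rewrite /S_sum big_nat_recr //= subSn // subnn expr1.
congr (_ + _); rewrite mulr_sumr; apply: eq_big_nat => i /andP [_ lt_it].
by rewrite subSn ?(ltnW lt_it) // exprS mulrA.
Qed.

Section RecurrenceBound.

Variables (R : realFieldType) (alpha A : R).
Hypotheses (alpha_gt0 : 0 < alpha) (alpha_lt1 : alpha < 1).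
Hypothesis A_large : 2 * alpha <= A * (1 - alpha).

Lemma large_gt0 {y : R} : 2 * alpha <= y * (1 - alpha) -> 0 < y.
Proof.
move=> y_large; rewrite -(@pmulr_lgt0 _ (1 - alpha)) ?subr_gt0 //.
by apply: lt_le_trans y_large; rewrite mulr_gt0.
Qed.

Lemma rec_step_le_div (s : R) (m : nat) : 2 * alpha <= m%:R * (1 - alpha) ->
  s <= A / m%:R -> alpha * s + alpha / m.+1%:R <= A / m.+1%:R.
Proof.
move=> m_large le_sA.
have m_gt0 := large_gt0 m_large.
have m1_gt0 : 0 < m.+1%:R :> R by rewrite ltr0n.
set x := A / m%:R in le_sA.
have A_xm : A = x * m%:R by rewrite /x divfK ?gt_eqF.
have x_gt0 : 0 < x by rewrite divr_gt0 // large_gt0.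
have gap : alpha <= x * ((1 - alpha) * m%:R - alpha).
  have : 0 <= x * (m%:R * (1 - alpha) - 2 * alpha) by rewrite mulr_ge0 ?subr_ge0 // ltW.
  by move: A_large; rewrite A_xm; lra.
apply: (le_trans (lerD (ler_wpM2l (ltW alpha_gt0) le_sA) (lexx _))).
rewrite -subr_ge0 A_xm.
have -> : x * m%:R / m.+1%:R - (alpha * x + alpha / m.+1%:R)
          = (x * ((1 - alpha) * m%:R - alpha) - alpha) / m.+1%:R.
  by rewrite -natr1; field; rewrite natr1 gt_eqF.
by rewrite divr_ge0 ?subr_ge0 // ltW.
Qed.

Lemma le_div_of_rec (s : nat -> R) (n : nat) :
  2 * alpha <= n%:R * (1 - alpha) ->
  (forall m, (n <= m)%N -> s m.+1 = alpha * s m + alpha / m.+1%:R) ->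
  n%:R * s n <= A -> forall t, (n <= t)%N -> s t <= A / t%:R.
Proof.
move=> n_large sS le_nsA t /subnKC <-; elim: (t - n)%N => [|k IH].
  by rewrite addn0 ler_pdivlMr ?large_gt0 // mulrC.
rewrite addnS sS ?leq_addr // rec_step_le_div //.
by apply: le_trans n_large _; rewrite ler_pM2r ?subr_gt0 // ler_nat leq_addr.
Qed.

End RecurrenceBound.

Theorem proposition1 (R : archiRealFieldType) (alpha : R)
  (h0 : 0 < alpha) (h1 : alpha < 1) (t : nat)
  (ht1 : (1 <= t)%N) (ht : t0 alpha <= t%:Z) :
  S_sum alpha t <= A_const alpha / t%:R.
Proof.
have le_c x : 2 * alpha / (1 - alpha) <= x -> 2 * alpha <= x * (1 - alpha).
  by rewrite ler_pdivrMr // subr_gt0.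
have t0_gt0 : 0 < t0 alpha by rewrite ceil_gt0 // divr_gt0 ?subr_gt0 ?mulr_gt0.
set n := `|t0 alpha|%N.
have t0n : t0 alpha = n%:Z by rewrite /n gez0_abs // ltW.
have n_gt0 : (1 <= n)%N by rewrite -(ltz_nat 0) -t0n.
have le_nt : (n <= t)%N by rewrite -lez_nat -t0n.
apply: (@le_div_of_rec R alpha (A_const alpha) h0 h1 _ (S_sum alpha) n _ _ _ t le_nt).
- by apply: le_c; rewrite /A_const le_max lexx orbT.
- by apply: le_c; have := ceil_ge (2 * alpha / (1 - alpha)); rewrite -/(t0 alpha) t0n.
- by move=> m le_nm; rewrite S_sumS // (leq_trans n_gt0).
- by rewrite /A_const le_max t0n lexx.
Qed.
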